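(* In the single-deceiver single-oblivious quadratic setting of the context, let $\Omega$ be the set of attainable values $J^{\mathrm{ref}}\in\mathbb{R}$, and assume $r_{1,2}\neq0$. Then: (a) if $\varepsilon_1r_{1,2}q_1q_3>0$, then $\Omega=\mathcal{J}_1\Big(\big(-\infty,-\tfrac{r_{1,1}}{2r_{1,2}}\big)\cap f(\Delta_1)\Big)$; (b) if $\varepsilon_1r_{1,2}q_1q_3<0$, then $\Omega=\mathcal{J}_1\Big(\big(-\tfrac{r_{1,1}}{2r_{1,2}},\infty\big)\cap f(\Delta_1)\Big)$.
   Context: Quadratic game: $J_i(x)=\frac12x^\top Q_ix+b_i^\top x+p_i$, $Q_i\in\mathbb{R}^{N\times N}$ symmetric, $b_i\in\mathbb{R}^N$, $p_i\in\mathbb{R}$. $(Q)_{j:}$ = $j$-th row, $(Q)_{:j}$ = $j$-th column, $(b)_j$ = $j$-th entry; $[Q]^{d,1}$ is $Q$ with row $d$ and column $1$ removed, $[Q]^{d,\sim}$ is $Q$ with only row $d$ removed. $\mathcal{Q}$ is the matrix with $m$-th row $(Q_m)_{m:}$, $\mathcal{B}$ the vector with $m$-th entry $(b_m)_m$. Player 1 is the only deceiver and deceives only player $d\neq1$. $\bar{\mathcal{Q}}$ is the $N\times N$ matrix whose only nonzero row is row $d$, equal to $(Q_d)_{1:}$; $\bar{\mathcal{B}}$ the vector whose only nonzero entry is entry $d$, equal to $(b_d)_1$. For $\delta\in\mathbb{R}$, $\mathcal{Q}_\delta=\mathcal{Q}+\delta\bar{\mathcal{Q}}$, $\mathcal{B}_\delta=\mathcal{B}+\delta\bar{\mathcal{B}}$.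 Fix $k>0$; assume $-k\mathcal{Q}$ is Hurwitz and $[\mathcal{Q}]^{d,1}$ is invertible. $x^*=-\mathcal{Q}^{-1}\mathcal{B}$; $\Delta_1=\{\delta\in\mathbb{R}:-k\mathcal{Q}_\delta\text{ Hurwitz}\}$; for $\delta\in\Delta_1$, $x_\delta=-\mathcal{Q}_\delta^{-1}\mathcal{B}_\delta$ (the deceptive Nash equilibrium). $\Phi=\begin{bmatrix}1\\-([\mathcal{Q}]^{d,1})^{-1}([\mathcal{Q}]^{d,\sim})_{:1}\end{bmatrix}\in\mathbb{R}^N$; $q_1=-\big((b_d)_1+(Q_d)_{1:}x^*\big)$, $q_2=(Q_d)_{1:}\Phi$, $q_3=(Q_d)_{d:}\Phi$; $r_{i,2}=\frac12\Phi^\top Q_i\Phi$, $r_{i,1}=(Q_ix^*+b_i)^\top\Phi$; $f(\delta)=\frac{q_1\delta}{q_2\delta+q_3}$ for $\delta\in\Delta_1$; $\mathcal{J}_i(e)=r_{i,2}e^2+r_{i,1}e+J_i(x^* )$. Given a nonzero constant $\varepsilon_1$, a value $J^{\mathrm{ref}}\in\mathbb{R}$ is attainable if there exists $\delta^*\in\Delta_1$ with $J_1(x_{\delta^*})=J^{\mathrm{ref}}$ and $\varepsilon_1\frac{d}{d\delta}J_1(x_\delta)\big|_{\delta=\delta^*}<0$. *)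

From HB Require Import structures.
From mathcomp Require Import all_boot all_order all_algebra.
From mathcomp Require Import all_classical all_reals all_analysis.
From mathcomp.real_closed Require complex.
Import complex.ComplexField.
Set Implicit Arguments. Unset Strict Implicit. Unset Printing Implicit Defensive.
Import Order.TTheory GRing.Theory Num.Theory.
Local Open Scope ring_scope.
Local Open Scope classical_set_scope.

Section QuadGame.
Variable R : realType.

Definition hurwitz (m : nat) (A : 'M[R]_m) : Prop :=
  forall z : complex.complex R,
    root (map_poly (fun x : R => complex.Complex x 0) (char_poly A)) z ->
    complex.Re z < 0.

(* Players are indexed by 'I_n.+1 (N = n.+1); player "1" is ord0. *)
Variable n : nat.
Local Notation N := n.+1.
Variables (Q : 'I_N -> 'M[R]_N) (b : 'I_N -> 'cV[R]_N) (p : 'I_N -> R).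

Definition Jcost (i : 'I_N) (x : 'cV[R]_N) : R :=
  (x^T *m Q i *m x) 0 0 / 2 + ((b i)^T *m x) 0 0 + p i.

Definition calQ : 'M[R]_N := \matrix_(m, j) Q m m j.
Definition calB : 'cV[R]_N := \col_m b m m 0.

Variable d : 'I_N.  (* the deceived player *)

Definition calQbar : 'M[R]_N := \matrix_(i, j) (if i == d then Q d ord0 j else 0).
Definition calBbar : 'cV[R]_N := \col_i (if i == d then b d ord0 0 else 0).

Definition calQd (delta : R) : 'M[R]_N := calQ + delta *: calQbar.
Definition calBd (delta : R) : 'cV[R]_N := calB + delta *: calBbar.

Definition xstar : 'cV[R]_N := - (invmx calQ *m calB).

Variable k : R.
Definition Delta1 : set R := [set delta | hurwitz (- k *: calQd delta)].

Definition xdelta (delta : R) : 'cV[R]_N := - (invmx (calQd delta) *m calBd delta).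

Definition Qd1 : 'M[R]_n := row' d (col' ord0 calQ).
Definition Qdcol1 : 'cV[R]_n := col ord0 (row' d calQ).

Definition Phi : 'cV[R]_N := col_mx (1 : 'M[R]_1) (- (invmx Qd1 *m Qdcol1)).

Definition q1 : R := - (b d ord0 0 + (row ord0 (Q d) *m xstar) 0 0).
Definition q2 : R := (row ord0 (Q d) *m Phi) 0 0.
Definition q3 : R := (row d (Q d) *m Phi) 0 0.

Definition r2 (i : 'I_N) : R := (Phi^T *m Q i *m Phi) 0 0 / 2.
Definition r1 (i : 'I_N) : R := ((Q i *m xstar + b i)^T *m Phi) 0 0.

Definition fdelta (delta : R) : R := q1 * delta / (q2 * delta + q3).

Definition calJ (i : 'I_N) (e : R) : R := r2 i * e ^+ 2 + r1 i * e + Jcost i xstar.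

Variable eps1 : R.
Definition attainable (Jref : R) : Prop :=
  exists2 dstar, Delta1 dstar &
    Jcost ord0 (xdelta dstar) = Jref /\
    eps1 * derive1 (fun delta => Jcost ord0 (xdelta delta)) dstar < 0.

Definition Omega : set R := [set Jref | attainable Jref].

End QuadGame.

From HB Require Import structures.
From mathcomp Require Import all_boot all_order all_algebra.
From mathcomp Require Import all_classical all_reals all_analysis.
From mathcomp Require Import ring.
From mathcomp.real_closed Require complex.
Import complex.ComplexField.
Import Order.TTheory GRing.Theory Num.Theory numFieldNormedType.Exports.
Local Open Scope ring_scope.
Local Open Scope classical_set_scope.

(* Deception only changes row [d] of the game matrix, and the other rows have
   the one-dimensional kernel spanned by [Phi].  Hence the deceptive
   equilibrium stays on the line [x_delta = xstar + f(delta) Phi], so that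
   [J_1(x_delta) = calJ_1(f(delta))], and by the chain rule
   [eps1 * d/ddelta J_1(x_delta)] has the sign of
   [eps1 r2 q1 q3 (f(delta) - c)], where [c] is the vertex of the parabola
   [calJ_1].  A value is thus attainable exactly when it is [calJ_1(e)] for
   some [e = f(delta)] on the correct side of [c]. *)

Lemma hurwitz_unitmx {R : realType} {m : nat} {A : 'M[R]_m} {k : R} :
  hurwitz (- k *: A) -> A \in unitmx.
Proof.
move=> hurA; apply: contraT; rewrite unitmxE unitfE negbK => /eqP detA0.
have := hurA 0; rewrite ltxx; apply.
rewrite rootE horner_coef0 coef_map_id0 // char_poly_det detZ detA0.
by rewrite !mulr0.
Qed.

Lemma unitmx_ker0 (F : fieldType) (m : nat) (A : 'M[F]_m) :
  (forall v : 'cV[F]_m, A *m v = 0 -> v = 0) -> A \in unitmx.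
Proof.
move=> ker0; apply: contraT; rewrite unitmxE unitfE negbK -det_tr.
case/det0P => w /negbTE <- wA0.
by rewrite -trmx_eq0; apply/eqP/ker0; rewrite -[A]trmxK -trmx_mul wA0 trmx0.
Qed.

Lemma row'_mul (F : pzRingType) (m l r : nat) (i : 'I_m)
    (A : 'M[F]_(m, l)) (B : 'M[F]_(l, r)) :
  row' i (A *m B) = row' i A *m B.
Proof. by apply/matrixP => s t; rewrite !mxE; apply: eq_bigr => j _; rewrite !mxE. Qed.

Section RealDerivatives.
Context {R : realType}.

Lemma is_derive_affine (c e x : R) :
  is_derive x 1 (fun t => c * t + e) c.
Proof.
have := is_deriveD (is_deriveZ c (is_derive_id x 1)) (is_derive_cst e x 1).
rewrite [X in is_derive _ _ X](_ : _ = fun t => c * t + e); last exact/funext.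
by rewrite addr0 /GRing.scale /= mulr1.
Qed.

Lemma is_derive_linfrac (a c e x : R) : c * x + e != 0 ->
  is_derive x 1 (fun t => a * t / (c * t + e)) (a * e / (c * x + e) ^+ 2).
Proof.
move=> den_neq0.
have := is_deriveM (is_deriveZ a (is_derive_id x 1))
  (@is_deriveV _ (fun t => c * t + e) x c 1 den_neq0 (is_derive_affine c e x)).
rewrite [X in is_derive _ _ X](_ : _ = fun t => a * t / (c * t + e)); last exact/funext.
by move/is_derive_eq; apply; rewrite /GRing.scale /= /GRing.scale /= mulr1; field.
Qed.

Lemma is_derive_quadratic_comp (f : R -> R) (a b c x df : R) :
  is_derive x 1 f df ->
  is_derive x 1 (fun t => a * f t ^+ 2 + b * f t + c) ((2 * a * f x + b) * df).
Proof.
move=> fdf.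
have := is_deriveD (is_deriveD (is_deriveZ a (is_deriveX 2 fdf)) (is_deriveZ b fdf))
  (is_derive_cst c x 1).
rewrite [X in is_derive _ _ X](_ : _ = fun t => a * f t ^+ 2 + b * f t + c); last exact/funext.
by move/is_derive_eq; apply; rewrite /GRing.scale /= /GRing.scale /= expr1; ring.
Qed.

End RealDerivatives.

Section DeceptiveGame.
Variables (R : realType) (n : nat).
Variables (Q : 'I_n.+1 -> 'M[R]_n.+1) (b : 'I_n.+1 -> 'cV[R]_n.+1) (p : 'I_n.+1 -> R).
Variable d : 'I_n.+1.

Local Notation e_d := (delta_mx d 0 : 'cV[R]_n.+1).

Lemma calQd_mul (delta : R) (w : 'cV[R]_n.+1) :
  calQd Q d delta *m w = calQ Q *m w + (delta * (row ord0 (Q d) *m w) 0 0) *: e_d.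
Proof.
rewrite /calQd; have -> : calQbar Q d = e_d *m row ord0 (Q d).
  apply/matrixP => i j; rewrite !mxE big_ord1 !mxE eqxx andbT.
  by case: eqP => _; rewrite ?mul1r ?mul0r.
by rewrite mulmxDl -scalemxAl -mulmxA {1}[row _ _ *m w]mx11_scalar mul_mx_scalar scalerA.
Qed.

Lemma row'_calQd_mul (delta : R) (w : 'cV[R]_n.+1) :
  row' d (calQd Q d delta *m w) = row' d (calQ Q) *m w.
Proof.
apply/matrixP => i j; rewrite -row'_mul calQd_mul !mxE.
by rewrite eq_sym (negbTE (neq_lift _ _)) mulr0 addr0.
Qed.

Lemma row'_calQ : (row' d (calQ Q) : 'M[R]_(n, 1 + n)) = row_mx (Qdcol1 Q d) (Qd1 Q d).
Proof.
apply/matrixP => i j; rewrite -(splitK j); case: (fintype.split j) => j'.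
  rewrite row_mxEl !mxE; congr (Q _ _ _); apply: val_inj => /=.
  by case: j' => [[]].
by rewrite row_mxEr !mxE; congr (Q _ _ _); exact: val_inj.
Qed.

Lemma Phi_top : Phi Q d ord0 0 = 1.
Proof.
rewrite /Phi (_ : ord0 = lshift n (ord0 : 'I_1)); last exact: val_inj.
by apply: etrans (col_mxEu _ _ _ _) _; rewrite mxE.
Qed.

Hypothesis Qd1_unit : Qd1 Q d \in unitmx.

Lemma row'_calQ_Phi : row' d (calQ Q) *m Phi Q d = 0.
Proof.
have := mul_row_col (Qdcol1 Q d) (Qd1 Q d) 1 (- (invmx (Qd1 Q d) *m Qdcol1 Q d)).
rewrite -row'_calQ => ->.
by rewrite mulmx1 mulmxN mulmxA mulmxV // mul1mx subrr.
Qed.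

Lemma row'_calQ_ker (w : 'cV[R]_n.+1) :
  row' d (calQ Q) *m w = 0 -> w = w ord0 0 *: Phi Q d.
Proof.
move=> w_ker; pose w' : 'M[R]_(1 + n, 1) := w.
have top : usubmx w' = w ord0 0 *: 1.
  rewrite [LHS]mx11_scalar -scalemx1 !mxE.
  by congr (w _ _ *: 1); apply: val_inj.
have bot : dsubmx w' = - (invmx (Qd1 Q d) *m Qdcol1 Q d) *m usubmx w'.
  have := mul_row_col (Qdcol1 Q d) (Qd1 Q d) (usubmx w') (dsubmx w').
  rewrite -row'_calQ vsubmxK w_ker => /esym/eqP; rewrite addr_eq0.
  move=> /eqP/(congr1 (mulmx (invmx (Qd1 Q d)))).
  by rewrite mulmxN mulKmx // mulmxA mulNmx => ->; rewrite opprK.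
by rewrite -[LHS](vsubmxK w') bot top /Phi -scalemxAr mulmx1 -scale_col_mx.
Qed.

Lemma calQ_Phi : calQ Q *m Phi Q d = q3 Q d *: e_d.
Proof.
apply/matrixP => i j; rewrite (ord1 j) [RHS]mxE [delta_mx _ _ _ _]mxE.
case: (unliftP d i) => [i' ->|->]; last first.
  by rewrite eqxx mulr1 /q3 !mxE; apply: eq_bigr => k _; rewrite !mxE.
rewrite eq_sym (negbTE (neq_lift _ _)) mulr0.
have /matrixP/(_ i' 0) := row'_calQ_Phi.
by rewrite -row'_mul !mxE.
Qed.

Lemma calQd_Phi (delta : R) : calQd Q d delta *m Phi Q d = (q2 Q d * delta + q3 Q d) *: e_d.
Proof. by rewrite calQd_mul calQ_Phi -scalerDl addrC mulrC. Qed.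

Lemma calQd_unitmx (delta : R) :
  (calQd Q d delta \in unitmx) = (q2 Q d * delta + q3 Q d != 0).
Proof.
apply/idP/idP => [Qd_unit|den_neq0].
  apply/eqP => den0; have := Phi_top.
  rewrite -(mulKmx Qd_unit (Phi Q d)) calQd_Phi den0 scale0r mulmx0 mxE.
  by move/esym/eqP; rewrite oner_eq0.
apply: unitmx_ker0 => w Qdw0.
have wE : w = w ord0 0 *: Phi Q d.
  apply: row'_calQ_ker; rewrite -(row'_calQd_mul delta) Qdw0.
  by apply/matrixP => i j; rewrite !mxE.
move: Qdw0; rewrite wE -scalemxAr calQd_Phi scalerA => /matrixP/(_ d 0).
rewrite !mxE eqxx mulr1 => /eqP.
by rewrite mulf_eq0 (negbTE den_neq0) orbF => /eqP ->; rewrite scale0r.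
Qed.

Hypothesis calQ_unit : calQ Q \in unitmx.

Lemma calQd_line_residual (delta e : R) :
  calQd Q d delta *m (xstar Q b + e *: Phi Q d) + calBd b d delta
  = (e * (q2 Q d * delta + q3 Q d) - delta * q1 Q b d) *: e_d.
Proof.
have calQ_xstar : calQ Q *m xstar Q b = - calB b.
  by rewrite /xstar mulmxN mulmxA mulmxV // mul1mx.
rewrite mulmxDr -scalemxAr calQd_Phi calQd_mul calQ_xstar /q1 /calBd.
have -> : calBbar b d = b d ord0 0 *: e_d.
  by apply/matrixP => i j; rewrite (ord1 j) !mxE; case: eqP; rewrite ?mulr1 ?mulr0.
move: (calB b) e_d => B E; apply/matrixP => i j; rewrite !mxE; ring.
Qed.

Lemma xdeltaE (delta : R) : q2 Q d * delta + q3 Q d != 0 ->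
  xdelta Q b d delta = xstar Q b + fdelta Q b d delta *: Phi Q d.
Proof.
move=> den_neq0; have Qd_unit : calQd Q d delta \in unitmx by rewrite calQd_unitmx.
have : calQd Q d delta *m (xstar Q b + fdelta Q b d delta *: Phi Q d) = - calBd b d delta.
  apply/eqP; rewrite -addr_eq0 calQd_line_residual /fdelta.
  by rewrite divfK // mulrC subrr scale0r.
by rewrite /xdelta -mulmxN => <-; rewrite mulKmx.
Qed.

Lemma Jcost_line (i : 'I_n.+1) (e : R) : (Q i)^T = Q i ->
  Jcost Q b p i (xstar Q b + e *: Phi Q d) = calJ Q b p d i e.
Proof.
move=> Qi_sym; rewrite /calJ /Jcost /r2 /r1.
move: (xstar Q b) (Phi Q d) (Q i) (b i) Qi_sym => x v M c M_sym.
have cross : (v^T *m M *m x) 0 0 = (x^T *m M *m v) 0 0.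
  have -> : (v^T *m M *m x) 0 0 = (v^T *m M *m x)^T 0 0 by rewrite [RHS]mxE.
  by rewrite !trmx_mul trmxK M_sym mulmxA.
rewrite !linearD !linearZ /= !mulmxDl -!scalemxAl !trmx_mul M_sym.
move: (x^T *m M *m x) (v^T *m M *m x) (x^T *m M *m v) (v^T *m M *m v) cross.
move: (c^T *m x) (c^T *m v) => cx cv xMx vMx xMv vMv cross.
by rewrite !mxE cross; field.
Qed.

Hypothesis Q0_sym : (Q ord0)^T = Q ord0.

Lemma Jcost_xdelta (delta : R) : q2 Q d * delta + q3 Q d != 0 ->
  Jcost Q b p ord0 (xdelta Q b d delta) = calJ Q b p d ord0 (fdelta Q b d delta).
Proof. by move=> den_neq0; rewrite xdeltaE // Jcost_line. Qed.

Lemma derive1_Jcost_xdelta (delta : R) : q2 Q d * delta + q3 Q d != 0 ->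
  derive1 (fun t => Jcost Q b p ord0 (xdelta Q b d t)) delta =
  (2 * r2 Q d ord0 * fdelta Q b d delta + r1 Q b d ord0) *
  (q1 Q b d * q3 Q d / (q2 Q d * delta + q3 Q d) ^+ 2).
Proof.
move=> den_neq0.
have den_cont : {for delta, continuous (fun t => q2 Q d * t + q3 Q d)}.
  apply/differentiable_continuous/derivable1_diffP.
  by case: (is_derive_affine (q2 Q d) (q3 Q d) delta).
have near_den : \forall t \near delta, q2 Q d * t + q3 Q d != 0.
  exact: cvgr_neq0 den_cont den_neq0.
have der : is_derive delta 1 (fun t => Jcost Q b p ord0 (xdelta Q b d t))
    ((2 * r2 Q d ord0 * fdelta Q b d delta + r1 Q b d ord0) *
     (q1 Q b d * q3 Q d / (q2 Q d * delta + q3 Q d) ^+ 2)).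
  apply: near_eq_is_derive (is_derive_quadratic_comp _ (r2 Q d ord0) (r1 Q b d ord0)
    (Jcost Q b p ord0 (xstar Q b)) _ _ (is_derive_linfrac (q1 Q b d) _ _ _ den_neq0)).
  by near=> t; rewrite Jcost_xdelta //; near: t.
by rewrite derive1E; case: der.
Unshelve. all: by end_near.
Qed.

Local Notation vertex := (- r1 Q b d ord0 / (2 * r2 Q d ord0)).

Lemma eps_derive1_Jcost_xdelta_lt0 (eps1 delta : R) :
  r2 Q d ord0 != 0 -> q2 Q d * delta + q3 Q d != 0 ->
  (eps1 * derive1 (fun t => Jcost Q b p ord0 (xdelta Q b d t)) delta < 0) =
  (eps1 * r2 Q d ord0 * q1 Q b d * q3 Q d * (fdelta Q b d delta - vertex) < 0).
Proof.
move=> r2_neq0 den_neq0; rewrite derive1_Jcost_xdelta //.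
set s := (X in X < 0 = _); set s' := (X in _ = (X < 0)).
have -> : s = 2 / (q2 Q d * delta + q3 Q d) ^+ 2 * s'.
  by rewrite /s /s'; field; rewrite r2_neq0.
by rewrite pmulr_rlt0 // divr_gt0 // exprn_even_gt0.
Qed.

Lemma Omega_eq (k eps1 : R) : r2 Q d ord0 != 0 ->
  Omega Q b p d k eps1 =
  calJ Q b p d ord0 @` ([set e | eps1 * r2 Q d ord0 * q1 Q b d * q3 Q d * (e - vertex) < 0]
                         `&` fdelta Q b d @` Delta1 Q d k).
Proof.
move=> r2_neq0.
have den_neq0 delta : Delta1 Q d k delta -> q2 Q d * delta + q3 Q d != 0.
  by move=> /hurwitz_unitmx; rewrite calQd_unitmx.
apply/seteqP; split.
- move=> _ [delta /[dup] Ddelta /den_neq0 den [<- der_lt0]].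
  exists (fdelta Q b d delta); last by rewrite Jcost_xdelta.
  split; last by exists delta.
  by rewrite /= -eps_derive1_Jcost_xdelta_lt0.
- move=> _ [e [/= lt0 [delta /[dup] Ddelta /den_neq0 den fdelta_e]] <-].
  subst e.
  exists delta => //; split; first by rewrite Jcost_xdelta.
  by rewrite eps_derive1_Jcost_xdelta_lt0.
Qed.

End DeceptiveGame.

Theorem theorem2 (R : realType) (n : nat)
  (Q : 'I_n.+1 -> 'M[R]_n.+1) (b : 'I_n.+1 -> 'cV[R]_n.+1) (p : 'I_n.+1 -> R)
  (d : 'I_n.+1) (k eps1 : R) :
  (forall i, (Q i)^T = Q i) ->
  d != ord0 ->
  0 < k ->
  hurwitz (- k *: calQ Q) ->
  Qd1 Q d \in unitmx ->
  eps1 != 0 ->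
  r2 Q d ord0 != 0 ->
  let Om := Omega Q b p d k eps1 in
  let J1 := calJ Q b p d ord0 in
  let c := - (r1 Q b d ord0) / (2 * r2 Q d ord0) in
  (0 < eps1 * r2 Q d ord0 * q1 Q b d * q3 Q d ->
     Om = J1 @` ([set e | e < c] `&` fdelta Q b d @` Delta1 Q d k)) /\
  (eps1 * r2 Q d ord0 * q1 Q b d * q3 Q d < 0 ->
     Om = J1 @` ([set e | c < e] `&` fdelta Q b d @` Delta1 Q d k)).
Proof.
move=> Q_sym _ _ /hurwitz_unitmx calQ_unit Qd1_unit _ r2_neq0 Om J1 c.
rewrite /Om Omega_eq ?Q_sym //.
split=> s_sign; congr (_ @` (_ `&` _)); apply: eq_set => e.
- by rewrite pmulr_rlt0 // subr_lt0.
- by rewrite nmulr_rlt0 // subr_gt0.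
Qed.
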